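(* Let $X(1),\dots,X(n)$ be UVs with values in $\mathscr{X}$ and $Y(1),\dots,Y(n)$ UVs with values in $\mathscr{Y}$ on a common sample space, $X(1:n)=(X(1),\dots,X(n))$, $Y(1:n)=(Y(1),\dots,Y(n))$, such that $[\![X(1:n)]\!]=[\![X(1)]\!]\times\cdots\times[\![X(n)]\!]$ and, for every $x(1:n)\in[\![X(1:n)]\!]$, $[\![Y(1:n)|x(1:n)]\!]=[\![Y(1)|x(1)]\!]\times\cdots\times[\![Y(n)|x(n)]\!]$. Under the product uncertainty assumption and the union bound assumption, $$I_0(Y(1:n);X(1:n))=\sum_{i=1}^n I_0(Y(i);X(i)).$$
   Context: A UV is a map $U$ from a sample space $\Omega$ to a set; $[\![U]\!]=\{U(\omega)\}$; $[\![U|w]\!]=\{U(\omega):W(\omega)=w\}$, $[\![U|W]\!]=\{[\![U|w]\!]:w\in[\![W]\!]\}$; $X(1:n)(\omega)=(X(1)(\omega),\dots,X(n)(\omega))$. An uncertainty function on a set $\mathscr{U}$ is a map $m$ on subsets of $\mathscr{U}$ with $m(\emptyset)=0$, $0<m(S)<\infty$ for nonempty $S$, $\max\{m(S_1),m(S_2)\}\le m(S_1\cup S_2)$. Here $m_{\mathscr{Y}}$ is defined on subsets of $\mathscr{Y}^k$ for every $k\ge1$, is an uncertainty function on each, and $m_{\mathscr{Y}}(\mathscr{Y}^k)=1$. Product uncertainty assumption: for every $k$ and $S_1,\dots,S_k\subseteq\mathscr{Y}$, $m_{\mathscr{Y}}(S_1\times\cdots\times S_k)=\prod_i m_{\mathscr{Y}}(S_i)$.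 Union bound assumption: $m_{\mathscr{Y}}(S_1\cup S_2)\le m_{\mathscr{Y}}(S_1)+m_{\mathscr{Y}}(S_2)$ for all $S_1,S_2\subseteq\mathscr{Y}^k$. $\delta$-mutual information: for UVs $U$ (with uncertainty function $m_{\mathscr{U}}$) and $W$, $u,u'\in[\![U]\!]$ are $\delta$-connected via $[\![U|W]\!]$ if there are $w_1,\dots,w_N\in[\![W]\!]$ with $u\in[\![U|w_1]\!]$, $u'\in[\![U|w_N]\!]$, $m_{\mathscr{U}}([\![U|w_i]\!]\cap[\![U|w_{i-1}]\!])/m_{\mathscr{U}}([\![U]\!])>\delta$ for $1<i\le N$; a set is $\delta$-connected if all pairs of its points are. A $\delta$-overlap family $[\![U|W]\!]^*_\delta$ is a family of distinct subsets covering $[\![U]\!]$, of largest cardinality among covering families with (i) each member $\delta$-connected and containing some $[\![U|w]\!]$; (ii) distinct members $S_1,S_2$ satisfy $m_{\mathscr{U}}(S_1\cap S_2)\le\delta\,m_{\mathscr{U}}([\![U]\!])$; (iii) each $[\![U|w]\!]$ contained in some member. $I_\delta(U;W)=\log_2|[\![U|W]\!]^*_\delta|$ if such a family exists, else $0$. *)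

From HB Require Import structures.
From mathcomp Require Import all_boot all_order all_algebra.
From mathcomp Require Import all_classical all_reals.
From mathcomp Require Import exp.
Set Implicit Arguments. Unset Strict Implicit. Unset Printing Implicit Defensive.
Import Order.TTheory GRing.Theory Num.Theory.
Local Open Scope classical_set_scope.
Local Open Scope ring_scope.
Local Open Scope card_scope.

Definition uv_range {Omega TU : Type} (U : Omega -> TU) : set TU := range U.

Definition uv_cond {Omega TU TW : Type} (U : Omega -> TU) (W : Omega -> TW)
  (w : TW) : set TU := U @` (W @^-1` [set w]).

Definition uncertainty_fun {R : realType} {TU : Type} (m : set TU -> R) : Prop :=
  [/\ m set0 = 0,
      (forall S, S !=set0 -> 0 < m S) &
      (forall S1 S2, Num.max (m S1) (m S2) <= m (S1 `|` S2))].

Definition dconnected {R : realType} {Omega TU TW : Type}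
  (mU : set TU -> R) (U : Omega -> TU) (W : Omega -> TW) (delta : R)
  (u u' : TU) : Prop :=
  exists (N : nat) (w : nat -> TW),
    [/\ (0 < N)%N,
        (forall i, (i < N)%N -> range W (w i)),
        uv_cond U W (w 0%N) u,
        uv_cond U W (w N.-1) u' &
        (forall i, (0 < i)%N -> (i < N)%N ->
           mU (uv_cond U W (w i) `&` uv_cond U W (w i.-1)) / mU (uv_range U)
             > delta)].

Definition dconnected_set {R : realType} {Omega TU TW : Type}
  (mU : set TU -> R) (U : Omega -> TU) (W : Omega -> TW) (delta : R)
  (S : set TU) : Prop :=
  forall u u', S u -> S u' -> dconnected mU U W delta u u'.

Definition admissible_family {R : realType} {Omega TU TW : Type}
  (mU : set TU -> R) (U : Omega -> TU) (W : Omega -> TW) (delta : R)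
  (F : set (set TU)) : Prop :=
  [/\ (forall S, F S -> S `<=` uv_range U),
      \bigcup_(S in F) S = uv_range U,
      (forall S, F S -> dconnected_set mU U W delta S /\
                        exists2 w, range W w & uv_cond U W w `<=` S),
      (forall S1 S2, F S1 -> F S2 -> S1 <> S2 ->
                        mU (S1 `&` S2) <= delta * mU (uv_range U)) &
      (forall w, range W w -> exists2 S, F S & uv_cond U W w `<=` S)].

Definition overlap_family {R : realType} {Omega TU TW : Type}
  (mU : set TU -> R) (U : Omega -> TU) (W : Omega -> TW) (delta : R)
  (F : set (set TU)) : Prop :=
  admissible_family mU U W delta F /\
  forall G, admissible_family mU U W delta G -> (G #<= F).

Definition log2 {R : realType} (x : R) : R := ln x / ln 2.

(* I_delta(U;W) = log2 |[[U|W]]*_delta| if such a family exists, else 0;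
   valued in the extended reals, +oo when the (maximal) family is infinite. *)
Definition Idelta {R : realType} {Omega TU TW : Type}
  (mU : set TU -> R) (U : Omega -> TU) (W : Omega -> TW) (delta : R)
  : \bar R :=
  match pselect (exists F, overlap_family mU U W delta F) with
  | left P =>
      let F := projT1 (cid P) in
      match pselect (exists n, F #= `I_n) with
      | left Q => (log2 ((projT1 (cid Q))%:R : R))%:E
      | right _ => +oo%E
      end
  | right _ => 0%E
  end.

(* Y^k is represented as 'I_k -> Y; Y^1 is identified with Y. *)
Definition m_one {R : realType} {Y : Type} (m : forall k : nat, set ('I_k -> Y) -> R)
  (S : set Y) : R := m 1%N [set f | S (f ord0)].

Definition uncertainty_family {R : realType} {Y : Type}
  (m : forall k : nat, set ('I_k -> Y) -> R) : Prop :=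
  forall k, (0 < k)%N -> uncertainty_fun (m k) /\ m k setT = 1.

Definition product_uncertainty {R : realType} {Y : Type}
  (m : forall k : nat, set ('I_k -> Y) -> R) : Prop :=
  forall k, (0 < k)%N -> forall S : 'I_k -> set Y,
    m k [set f | forall i, S i (f i)] = \prod_(i < k) m_one m (S i).

Definition union_bound {R : realType} {Y : Type}
  (m : forall k : nat, set ('I_k -> Y) -> R) : Prop :=
  forall k, (0 < k)%N -> forall S1 S2 : set ('I_k -> Y),
    m k (S1 `|` S2) <= m k S1 + m k S2.

Definition uv_tuple {Omega T : Type} {n : nat} (X : 'I_n -> Omega -> T)
  : Omega -> ('I_n -> T) := fun o i => X i o.

From HB Require Import structures.
From mathcomp Require Import all_boot all_order all_algebra.
From mathcomp Require Import all_classical all_reals.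
From mathcomp Require Import exp.
From mathcomp Require Import finmap.
From mathcomp Require Import zify.
Import Order.TTheory GRing.Theory Num.Theory.
Local Open Scope classical_set_scope.
Local Open Scope ring_scope.
Local Open Scope card_scope.
Set Implicit Arguments. Unset Strict Implicit.

(* At delta = 0 the overlap family is forced.  As m is positive exactly on
   nonempty sets, two values are 0-connected iff a chain of conditional ranges
   with pairwise intersecting neighbours links them, and every admissible
   family must be the set of classes of this equivalence relation; hence I_0 is
   log2 of the number of classes (+oo if there are infinitely many).  Under the
   product hypotheses a chain for Y(1:n) is the same as a chain in every
   coordinate (shorter coordinate chains are padded by repeating their last
   range), so the classes of Y(1:n) are the products of classes of the Y(i):
   their number is multiplicative and log2 makes it additive. *)

Definition prod_set {T : Type} {n : nat} (A : 'I_n -> set T) : set ('I_n -> T) :=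
  [set g | forall i, A i (g i)].

Section ProdSet.
Context {T : Type} {n : nat}.

Lemma prod_set_inj :
  {in [set A : 'I_n -> set T | forall i, A i !=set0] &, injective prod_set}.
Proof.
suff sub (A B : 'I_n -> set T) : (forall i, A i !=set0) ->
    prod_set A = prod_set B -> forall i, A i `<=` B i.
  move=> A B /set_mem A0 /set_mem B0 AB; apply/funext => i.
  by apply/seteqP; split; [exact: sub | exact: sub (esym AB) i].
move=> A0 AB i t Ait; have [a Aa] := choice A0.
pose g j := if j == i then t else a j.
have : prod_set A g by move=> j; rewrite /g; case: eqP => [->|].
by rewrite AB => /(_ i); rewrite /g eqxx.
Qed.

Lemma infinite_prod_set (A : 'I_n -> set T) j :
  (forall i, A i !=set0) -> infinite_set (A j) -> infinite_set (prod_set A).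
Proof.
move=> A0 Ajinf Afin; apply: Ajinf; have [a Aa] := choice A0.
pose ext x i := if i == j then x else a i.
have ext_inj : {in A j &, injective ext}.
  by move=> x y _ _ /(congr1 (fun g => g j)); rewrite /ext eqxx.
rewrite -(eq_finite_set (inj_card_eq ext_inj)).
by apply: sub_finite_set Afin => _ [x Ajx <-] i; rewrite /ext; case: eqP => [->|].
Qed.

End ProdSet.

Lemma card_prod_set {T : choiceType} {n : nat} (A : 'I_n -> set T)
    (k : 'I_n -> nat) :
  (forall i, A i #= `I_(k i)) -> prod_set A #= `I_(\prod_(i < n) k i)%N.
Proof.
move=> Ak; pose F := {dffun forall i : 'I_n, fset_set (A i)}.
have Afin i : finite_set (A i) by apply/finite_setP; exists (k i).
pose val_of (f : F) i := fsval (f i).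
have val_ofE : val_of @` setT = prod_set A.
  apply/seteqP; split=> [_ [f _ <-] i|g Ag].
    by have := fsvalP (f i); rewrite in_fset_set // => /set_mem.
  have Agi i : g i \in fset_set (A i) by rewrite in_fset_set //; exact: mem_set.
  exists [ffun i => [` Agi i]%fset] => //.
  by apply/funext => i; rewrite /val_of ffunE.
have val_of_inj : {in setT &, injective val_of}.
  move=> f1 f2 _ _ e; apply/ffunP => i.
  exact/val_inj/(congr1 (fun g => g i) e).
rewrite -val_ofE; apply: card_eq_trans (inj_card_eq val_of_inj) _.
have -> : (\prod_(i < n) k i = #|F|)%N.
  rewrite card_dep_ffun foldrE big_map big_enum /=.
  by apply: eq_bigr => i _; rewrite -cardfE (card_fset_set (Ak i)).
apply: card_eq_trans _ (card_esym card_II).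
have enum_rank_onto : enum_rank @` [set: F] = [set: 'I_#|F|].
  by apply/seteqP; split => // r _; exists (enum_val r); rewrite ?enum_valK.
rewrite -enum_rank_onto; apply: card_esym; apply: inj_card_eq => x y _ _.
exact: enum_rank_inj.
Qed.

Lemma ln_prod {R : realType} {I : Type} (r : seq I) (F : I -> R) :
  (forall i, 0 < F i) -> ln (\prod_(i <- r) F i) = \sum_(i <- r) ln (F i).
Proof.
move=> Fgt0; elim: r => [|a r IHr]; first by rewrite !big_nil ln1.
rewrite !big_cons lnM ?IHr // posrE //.
by elim/big_rec: _ => // i x _ x0; rewrite mulr_gt0.
Qed.

Definition log2_card {R : realType} {T : choiceType} (A : set T) : \bar R :=
  if `[< finite_set A >] then (log2 (#|` fset_set A|%:R : R))%:E else +oo%E.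

Section Log2Card.
Context {R : realType}.

Lemma log2_cardE {T : choiceType} (A : set T) k :
  A #= `I_k -> log2_card A = (log2 (k%:R : R))%:E.
Proof.
move=> Ak; rewrite /log2_card asboolT ?(card_fset_set Ak) //.
by apply/finite_setP; exists k.
Qed.

Lemma log2_card_infinite {T : choiceType} (A : set T) :
  infinite_set A -> log2_card A = +oo%E :> \bar R.
Proof. by move=> Ainf; rewrite /log2_card asboolF. Qed.

Lemma log2_card_ge0 {T : choiceType} (A : set T) : (0 <= log2_card A :> \bar R)%E.
Proof.
rewrite /log2_card; case: asboolP => _; last exact: leey.
rewrite lee_fin /log2 divr_ge0 //; last by apply/ltW/ln_gt0; rewrite ltr1n.
have [->|k0] := posnP #|` fset_set A|; first by rewrite ln0.
by apply: ln_ge0; rewrite ler1n.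
Qed.

Lemma log2_card_eq {T T' : choiceType} (A : set T) (B : set T') :
  A #= B -> log2_card A = log2_card B :> \bar R.
Proof.
move=> AB; have [/finite_setP[k Ak]|Ainf] := pselect (finite_set A).
  by rewrite (log2_cardE Ak) (log2_cardE (card_eq_trans (card_esym AB) Ak)).
by rewrite !log2_card_infinite // -(eq_finite_set AB).
Qed.

(* [ln 0 = 0], so the empty set gets [0] rather than [-oo]. *)
Lemma log2_card_set0 {T : choiceType} : log2_card (set0 : set T) = 0%E :> \bar R.
Proof. by rewrite (log2_cardE (k := 0)) ?II0 ?card_eq00 // /log2 ln0 ?mul0r. Qed.

Lemma log2_card_prod {T : choiceType} {n : nat} (A : 'I_n -> set T) :
  (forall i, A i !=set0) ->
  log2_card (prod_set A) = (\sum_(i < n) log2_card (A i))%E :> \bar R.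
Proof.
move=> A0; have [Afin|/existsNP[j Ajinf]] := pselect (forall i, finite_set (A i)).
  have [k Ak] := choice (fun i => proj1 (finite_setP _) (Afin i)).
  have k_gt0 i : (0 < k i)%N.
    have [k0|//] := posnP (k i); have := Ak i.
    by rewrite k0 II0 card_eq0 => /eqP Ai0; have := A0 i; rewrite Ai0 => -[].
  rewrite (log2_cardE (card_prod_set Ak)).
  rewrite (eq_bigr _ (fun i _ => log2_cardE (Ak i))).
  rewrite sumEFin /log2 natr_prod ln_prod ?mulr_suml // => i.
  by rewrite ltr0n.
rewrite log2_card_infinite; last exact: infinite_prod_set A0 Ajinf.
rewrite (bigD1 j) //= log2_card_infinite // addye // gt_eqF //.
by apply: (lt_le_trans ltNy0); apply: sume_ge0 => i _; exact: log2_card_ge0.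
Qed.

End Log2Card.

Section OverlapChains.
Context {Omega TU TW : Type}.
Variables (U : Omega -> TU) (W : Omega -> TW).

Definition overlap_path (N : nat) (w : nat -> TW) (u u' : TU) : Prop :=
  [/\ (0 < N)%N, (forall i, (i < N)%N -> range W (w i)),
      uv_cond U W (w 0%N) u, uv_cond U W (w N.-1) u' &
      (forall i, (0 < i)%N -> (i < N)%N ->
         uv_cond U W (w i) `&` uv_cond U W (w i.-1) !=set0)].

Definition overlap_connected (u u' : TU) : Prop :=
  exists N w, overlap_path N w u u'.

Lemma uv_cond_sub_range w : uv_cond U W w `<=` uv_range U.
Proof. by move=> _ [o _ <-]; exists o. Qed.

Lemma overlap_connected_range u u' :
  overlap_connected u u' -> uv_range U u /\ uv_range U u'.
Proof.
by move=> [N [w [_ _ /uv_cond_sub_range ? /uv_cond_sub_range ? _]]].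
Qed.

Lemma overlap_connected_sym u u' :
  overlap_connected u u' -> overlap_connected u' u.
Proof.
move=> [N [w [N0 Wr wu wu' Hw]]].
exists N, (fun i => w (N.-1 - i)%N); split => //.
- by move=> i iN; apply: Wr; lia.
- by rewrite subn0.
- by rewrite subnn.
- move=> i i0 iN; have := Hw (N - i)%N ltac:(lia) ltac:(lia).
  have -> : (N.-1 - i = (N - i).-1)%N by lia.
  have -> : (N.-1 - i.-1 = N - i)%N by lia.
  by rewrite setIC.
Qed.

Lemma overlap_connected_trans u v z :
  overlap_connected u v -> overlap_connected v z -> overlap_connected u z.
Proof.
move=> [N1 [w1 [N10 Wr1 w1u w1v Hw1]]] [N2 [w2 [N20 Wr2 w2v w2z Hw2]]].
exists (N1 + N2)%N, (fun i => if (i < N1)%N then w1 i else w2 (i - N1)%N).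
split.
- lia.
- by move=> i iN; case: ltnP => h; [apply: Wr1 | apply: Wr2]; lia.
- by rewrite N10.
- case: ltnP => h; first lia.
  by have -> : ((N1 + N2).-1 - N1 = N2.-1)%N by lia.
- move=> i i0 iN; case: (ltnP i N1) => h1; case: (ltnP i.-1 N1) => h2.
  + exact: Hw1.
  + lia.
  + have -> : (i - N1 = 0)%N by lia.
    have -> : i.-1 = N1.-1 by lia.
    by exists v.
  + have := Hw2 (i - N1)%N ltac:(lia) ltac:(lia).
    by have -> : ((i - N1).-1 = i.-1 - N1)%N by lia.
Qed.

Lemma overlap_path_pad N M w u u' : overlap_path N w u u' -> (N <= M)%N ->
  overlap_path M (fun j => w (minn j N.-1)) u u'.
Proof.
move=> [N0 Wr wu wu' Hw] NM; split.
- lia.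
- by move=> j jM; apply: Wr; lia.
- by rewrite min0n.
- by have -> : minn M.-1 N.-1 = N.-1 by lia.
- move=> j j0 jM; have [jN|Nj] := ltnP j N.
    have -> : minn j N.-1 = j by lia.
    have -> : minn j.-1 N.-1 = j.-1 by lia.
    exact: Hw.
  have -> : minn j N.-1 = N.-1 by lia.
  have -> : minn j.-1 N.-1 = N.-1 by lia.
  by exists u'; rewrite setIid.
Qed.

Lemma uv_cond_connected o : uv_cond U W (W o) `<=` overlap_connected (U o).
Proof.
move=> v Wv; exists 1%N, (fun _ => W o); split => //; last by move=> i; lia.
by exists o.
Qed.

Lemma overlap_connected_refl u : uv_range U u -> overlap_connected u u.
Proof. by case=> o _ <-; apply: uv_cond_connected; exists o. Qed.

Definition overlap_class (u : TU) : set TU := overlap_connected u.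

Definition overlap_classes : set (set TU) := overlap_class @` uv_range U.

Lemma overlap_class_eq u v :
  overlap_connected u v -> overlap_class u = overlap_class v.
Proof.
move=> uv; apply/seteqP; split => z.
- exact/overlap_connected_trans/(overlap_connected_sym uv).
- exact: overlap_connected_trans uv.
Qed.

Lemma overlap_classes_nonempty S : overlap_classes S -> S !=set0.
Proof. by move=> [u ru <-]; exists u; apply: overlap_connected_refl. Qed.

End OverlapChains.

Section ZeroOverlap.
Context {R : realType} {Omega TU TW : Type}.
Variables (mU : set TU -> R) (U : Omega -> TU) (W : Omega -> TW).
Hypothesis mU0 : mU set0 = 0.
Hypothesis mU_gt0 : forall S, S !=set0 -> 0 < mU S.

Lemma mU_ratio_gt0 A B : A `<=` B -> (0 < mU A / mU B) <-> A !=set0.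
Proof.
move=> AB; split=> [|[a Aa]].
  by move=> h; apply/set0P; apply: contraTneq h => ->; rewrite mU0 mul0r ltxx.
by apply: divr_gt0; apply: mU_gt0; exists a => //; exact: AB.
Qed.

Lemma dconnected0E u u' : dconnected mU U W 0 u u' <-> overlap_connected U W u u'.
Proof.
have sub w w' : uv_cond U W w `&` uv_cond U W w' `<=` uv_range U.
  by move=> z [wz _]; exact: uv_cond_sub_range wz.
by split=> -[N [w [N0 Wr wu wu' Hw]]]; exists N, w; split => // i i0 iN;
  apply/(mU_ratio_gt0 (sub _ _)); exact: Hw.
Qed.

Lemma overlap_classes_admissible :
  admissible_family mU U W 0 (overlap_classes U W).
Proof.
split.
- by move=> _ [u _ <-] v uv; exact: (overlap_connected_range uv).2.
- apply/seteqP; split=> [v [_ [u _ <-] uv]|v rv].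
    exact: (overlap_connected_range uv).2.
  by exists (overlap_class U W v); [exists v | exact: overlap_connected_refl].
- move=> _ [u [o _ <-] <-]; split.
    move=> a b ua ub; apply/dconnected0E.
    exact: overlap_connected_trans (overlap_connected_sym ua) ub.
  by exists (W o); [exists o | exact: uv_cond_connected].
- move=> _ _ [u1 _ <-] [u2 _ <-] neq.
  suff -> : overlap_class U W u1 `&` overlap_class U W u2 = set0.
    by rewrite mU0 mul0r.
  apply/seteqP; split => // v [u1v u2v]; apply/neq/overlap_class_eq.
  exact: overlap_connected_trans u1v (overlap_connected_sym u2v).
- move=> _ [o _ <-]; exists (overlap_class U W (U o)).
    by exists (U o) => //; exists o.
  exact: uv_cond_connected.
Qed.

Section Admissible.
Variable G : set (set TU).
Hypothesis G_adm : admissible_family mU U W 0 G.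

Lemma admissible0_cond_sub S w : G S -> range W w ->
  uv_cond U W w `&` S !=set0 -> uv_cond U W w `<=` S.
Proof.
case: G_adm => _ _ _ G_disj G_cond GS Ww [z [wz Sz]].
have [S' GS' wS'] := G_cond w Ww; suff -> : S = S' by [].
apply: contrapT => SS'; have := G_disj _ _ GS GS' SS'; rewrite mul0r.
by apply/negP; rewrite -ltNge; apply: mU_gt0; exists z; split => //; exact: wS'.
Qed.

Lemma admissible0_class S u : G S -> S u -> S = overlap_class U W u.
Proof.
move=> GS Su; apply/seteqP; split=> v.
  move=> Sv; apply/dconnected0E; have [_ _ G_conn _ _] := G_adm.
  exact: (G_conn S GS).1 u v Su Sv.
move=> [N [w [N0 Wr wu wv Hw]]].
suff wS j : (j < N)%N -> uv_cond U W (w j) `<=` S by apply: (wS N.-1) wv; lia.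
elim: j => [_|j IHj jN].
  by apply: admissible0_cond_sub GS (Wr 0%N N0) _; exists u.
apply: admissible0_cond_sub GS (Wr _ jN) _; have [z [wz wz']] := Hw j.+1 isT jN.
by exists z; split => //; apply: IHj (ltnW jN) _ wz'.
Qed.

Lemma admissible0E : G = overlap_classes U W.
Proof.
have [_ G_cover G_conn _ _] := G_adm.
apply/seteqP; split=> [S GS|_ [u ru <-]].
  have [_ [_ [o _ <-] oS]] := G_conn S GS.
  have SUo : S (U o) by apply: oS; exists o.
  by exists (U o); [exists o | rewrite (admissible0_class GS SUo)].
have : (\bigcup_(S in G) S) u by rewrite G_cover.
by case=> S GS Su; rewrite -(admissible0_class GS Su).
Qed.

End Admissible.

Lemma overlap_family0 : overlap_family mU U W 0 (overlap_classes U W).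
Proof.
split; first exact: overlap_classes_admissible.
by move=> G /admissible0E ->; exact: card_lexx.
Qed.

Lemma Idelta0E : Idelta mU U W 0 = log2_card (overlap_classes U W).
Proof.
rewrite /Idelta; case: pselect => [F_ex|]; last first.
  by case; exists (overlap_classes U W); exact: overlap_family0.
have -> : projT1 (cid F_ex) = overlap_classes U W.
  exact: admissible0E (projT2 (cid F_ex)).1.
case: pselect => [k_ex|not_fin].
  by rewrite (log2_cardE (projT2 (cid k_ex))).
by rewrite log2_card_infinite // => /finite_setP.
Qed.

End ZeroOverlap.

Section TupleUV.
Context {Omega X Y : Type} {n : nat}.
Variables (Xs : 'I_n -> Omega -> X) (Ys : 'I_n -> Omega -> Y).
Hypothesis range_tuple :
  uv_range (uv_tuple Xs) = prod_set (fun i => uv_range (Xs i)).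
Hypothesis cond_tuple : forall x, uv_range (uv_tuple Xs) x ->
  uv_cond (uv_tuple Ys) (uv_tuple Xs) x
    = prod_set (fun i => uv_cond (Ys i) (Xs i) (x i)).

Lemma range_tupleP x : range (uv_tuple Xs) x <-> forall i, range (Xs i) (x i).
Proof. by rewrite -[range _]/(uv_range _) range_tuple. Qed.

Lemma overlap_path_tuple N (w : nat -> 'I_n -> X) y y' : (0 < N)%N ->
  overlap_path (uv_tuple Ys) (uv_tuple Xs) N w y y' <->
  forall i, overlap_path (Ys i) (Xs i) N (fun j => w j i) (y i) (y' i).
Proof.
move=> N0; split=> [[_ Wr wy wy' Hw] i|Hw_i].
  have condE j : (j < N)%N -> uv_cond (uv_tuple Ys) (uv_tuple Xs) (w j)
      = prod_set (fun i => uv_cond (Ys i) (Xs i) (w j i)).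
    by move=> /Wr; exact: cond_tuple.
  split => //.
  - by move=> j /Wr /range_tupleP.
  - by move: wy; rewrite condE // => /(_ i).
  - by move: wy'; rewrite condE; [move=> /(_ i) | lia].
  - move=> j j0 jN; have [z] := Hw j j0 jN.
    by rewrite !condE //; [case=> /(_ i) wz /(_ i) wz'; exists (z i) | lia].
have Wr j : (j < N)%N -> range (uv_tuple Xs) (w j).
  by move=> jN; apply/range_tupleP => i; have [_ Wr _ _ _] := Hw_i i; exact: Wr.
have condE j : (j < N)%N -> uv_cond (uv_tuple Ys) (uv_tuple Xs) (w j)
    = prod_set (fun i => uv_cond (Ys i) (Xs i) (w j i)).
  by move=> /Wr; exact: cond_tuple.
split => //.
- by rewrite condE // => i; have [] := Hw_i i.
- by rewrite condE; [move=> i; have [] := Hw_i i | lia].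
- move=> j j0 jN; rewrite !condE //; last lia.
  have [z zP] := choice (fun i => let: And5 _ _ _ _ Hw := Hw_i i in Hw j j0 jN).
  by exists z; split=> i; have [] := zP i.
Qed.

Lemma overlap_connected_tuple y y' :
  overlap_connected (uv_tuple Ys) (uv_tuple Xs) y y' <->
  forall i, overlap_connected (Ys i) (Xs i) (y i) (y' i).
Proof.
split=> [[N [w yy']] i|yy'].
  have [N0 _ _ _ _] := yy'; exists N, (fun j => w j i).
  exact: (overlap_path_tuple w y y' N0).1 yy' i.
have [N [w yy'_i]] : exists N w, forall i,
    overlap_path (Ys i) (Xs i) (N i) (w i) (y i) (y' i).
  by have [N Nw] := choice yy'; have [w ?] := choice Nw; exists N, w.
pose M := (\max_(i < n) N i).+1.
exists M, (fun j i => w i (minn j (N i).-1)).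
apply/overlap_path_tuple => // i; apply: overlap_path_pad (yy'_i i) _.
exact/leqW/leq_bigmax.
Qed.

Lemma overlap_class_tuple y : overlap_class (uv_tuple Ys) (uv_tuple Xs) y
  = prod_set (fun i => overlap_class (Ys i) (Xs i) (y i)).
Proof. by apply/seteqP; split=> y' /overlap_connected_tuple. Qed.

Lemma overlap_classes_tuple : overlap_classes (uv_tuple Ys) (uv_tuple Xs)
  = prod_set @` prod_set (fun i => overlap_classes (Ys i) (Xs i)).
Proof.
apply/seteqP; split=> [_ [_ [o _ <-] <-]|_ [A A_cls <-]].
  exists (fun i => overlap_class (Ys i) (Xs i) (Ys i o)).
    by move=> i; exists (Ys i o) => //; exists o.
  by rewrite overlap_class_tuple.
have u_ex i : exists u,
    uv_range (Ys i) u /\ overlap_class (Ys i) (Xs i) u = A i.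
  by have [u ru uA] := A_cls i; exists u.
have [u uP] := choice u_ex.
have uu : overlap_connected (uv_tuple Ys) (uv_tuple Xs) u u.
  by apply/overlap_connected_tuple => i; apply/overlap_connected_refl/(uP i).1.
exists u; first exact: (overlap_connected_range uu).1.
rewrite overlap_class_tuple; congr prod_set.
by apply/funext => i; exact: (uP i).2.
Qed.

Lemma card_overlap_classes_tuple : overlap_classes (uv_tuple Ys) (uv_tuple Xs)
  #= prod_set (fun i => overlap_classes (Ys i) (Xs i)).
Proof.
rewrite overlap_classes_tuple; apply: inj_card_eq; apply: sub_in2 prod_set_inj.
by move=> A /set_mem A_cls; apply/mem_set => i; exact: overlap_classes_nonempty.
Qed.

End TupleUV.

Lemma uncertainty_fun_m_one {R : realType} {Y : Type}
    (m : forall k : nat, set ('I_k -> Y) -> R) :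
  uncertainty_family m -> uncertainty_fun (m_one m).
Proof.
move=> m_fam; have [[m0 m_gt0 m_max] _] := m_fam 1%N isT.
split.
- by rewrite /m_one -m0; congr (m 1%N _); apply/seteqP; split.
- by move=> S [s Ss]; apply: m_gt0; exists (fun _ => s).
- by move=> S1 S2; exact: m_max.
Qed.

Theorem corollary1 (R : realType) (Omega X Y : Type) (n : nat)
  (m : forall k : nat, set ('I_k -> Y) -> R)
  (Xs : 'I_n -> Omega -> X) (Ys : 'I_n -> Omega -> Y) :
  (0 < n)%N ->
  uncertainty_family m ->
  product_uncertainty m ->
  union_bound m ->
  uv_range (uv_tuple Xs) = [set x | forall i, uv_range (Xs i) (x i)] ->
  (forall x, uv_range (uv_tuple Xs) x ->
     uv_cond (uv_tuple Ys) (uv_tuple Xs) x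
       = [set y | forall i, uv_cond (Ys i) (Xs i) (x i) (y i)]) ->
  Idelta (m n) (uv_tuple Ys) (uv_tuple Xs) 0
    = (\sum_(i < n) Idelta (m_one m) (Ys i) (Xs i) 0)%E.
Proof.
move=> n_gt0 m_fam _ _ range_tuple cond_tuple.
have [[mn0 mn_gt0 _] _] := m_fam n n_gt0.
have [m10 m1_gt0 _] := uncertainty_fun_m_one m_fam.
rewrite Idelta0E // (eq_bigr _ (fun i _ => Idelta0E _ _ m10 m1_gt0)).
have [[o]|no_o] := pselect (inhabited Omega); last first.
  have classes0 T T' (U : Omega -> T) (W : Omega -> T') :
      overlap_classes U W = set0.
    by apply/seteqP; split=> // S [u [o _ _] _]; case: no_o.
  rewrite classes0 log2_card_set0 big1 // => i _.
  by rewrite classes0 log2_card_set0.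
rewrite (log2_card_eq (card_overlap_classes_tuple range_tuple cond_tuple)).
rewrite log2_card_prod // => i; exists (overlap_class (Ys i) (Xs i) (Ys i o)).
by exists (Ys i o) => //; exists o.
Qed.
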